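(* Let $p$ be a prime greater than $3$ and let $t$ be an indeterminate. Then $$P_{[p/3]}(t)\equiv\sum_{k=0}^{[p/3]}\frac{(3k)!}{k!^3}\Big(\frac{1-t}{54}\Big)^k\pmod p.$$
   Context: $P_n(x)$ denotes the $n$-th Legendre polynomial, defined by $\frac1{\sqrt{1-2xt+t^2}}=\sum_{n\ge0}P_n(x)t^n$; equivalently $P_n(x)=\frac1{2^n}\sum_{k=0}^{[n/2]}\frac{(-1)^k(2n-2k)!}{k!(n-k)!(n-2k)!}x^{n-2k}$. $[x]$ is the greatest integer not exceeding $x$. A congruence between polynomials with rational coefficients having denominators prime to $p$ means coefficientwise congruence modulo $p$. *)

From mathcomp Require Import all_boot all_order all_algebra.
Set Implicit Arguments. Unset Strict Implicit. Unset Printing Implicit Defensive.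
Import Order.TTheory GRing.Theory Num.Theory.
Local Open Scope ring_scope.

Definition legendreP (n : nat) : {poly rat} :=
  (2%:R ^- n) *: \sum_(k < n./2.+1)
     (((-1) ^+ k * ((2 * n - 2 * k)`!)%:R
        / ((k`!)%:R * ((n - k)`!)%:R * ((n - 2 * k)`!)%:R)) *: 'X^(n - 2 * k)).

Definition pintegral (p : nat) (q : rat) : Prop := ~~ (p %| `|denq q|)%N.

Definition poly_cong_mod (p : nat) (f g : {poly rat}) : Prop :=
  forall i : nat, [/\ pintegral p f`_i, pintegral p g`_i
                    & (p%:Z %| numq (f`_i - g`_i))%Z].

From mathcomp Require Import all_boot all_order all_algebra.
From mathcomp Require Import ring zify.
Import GRing.Theory Num.Theory.
Local Open Scope ring_scope.

Set Implicit Arguments.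
Unset Strict Implicit.
Unset Printing Implicit Defensive.

(* P_n(x) = sum_k C(n,k) C(n+k,k) ((x-1)/2)^k: both sides are polynomial
   solutions of Legendre's equation (1-x^2) f'' - 2x f' + n(n+1) f = 0 of
   degree at most n with the same coefficient of x^n, and the recursion on
   coefficients shows such a solution is determined by that coefficient.
   For n = [p/3] the prime p divides
   (3n+1)(3n+2) = 9(n-j)(n+j+1) + (3j+1)(3j+2), so modulo p
   27 (j+1)(n-j)(n+j+1) = -(3j+1)(3j+2)(3j+3), and the product over j < k
   turns C(n,k) C(n+k,k) / 2^k into (3k)!/k!^3 (-1/54)^k.  All denominators
   involved divide k!^3 54^k with k <= n < p, hence are prime to p. *)

Lemma natr_fact_neq0 (R : numDomainType) n : (n`!%:R : R) != 0.
Proof. by rewrite pnatr_eq0 -lt0n fact_gt0. Qed.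

Section LegendreOperator.

Variable n : nat.

Definition legendre_op (f : {poly rat}) : {poly rat} :=
  (1 - 'X^2) * f^`()^`() - 2%:R * ('X * f^`()) + (n * n.+1)%:R * f.

Lemma coef_legendre_op f i : (legendre_op f)`_i =
  (i.+2 * i.+1)%:R * f`_i.+2 + ((n * n.+1)%:R - (i * i.+1)%:R) * f`_i.
Proof.
rewrite /legendre_op !mulr_natl coefD coefB !coefMn mulrBl mul1r coefB.
rewrite coefXnM coefXM !coef_deriv.
case: i => [|[|i]] /=; try ring.
by rewrite subn2; ring.
Qed.

Lemma legendre_opD f g : legendre_op (f + g) = legendre_op f + legendre_op g.
Proof. rewrite /legendre_op !derivD; ring. Qed.

Lemma legendre_opZ a f : legendre_op (a *: f) = a *: legendre_op f.
Proof. rewrite /legendre_op !derivZ -!mul_polyC; ring. Qed.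

Lemma legendre_opB f g : legendre_op (f - g) = legendre_op f - legendre_op g.
Proof. by rewrite legendre_opD -scaleN1r legendre_opZ scaleN1r. Qed.

Lemma legendre_op_sum (I : Type) (r : seq I) (P : pred I) (F : I -> {poly rat}) :
  legendre_op (\sum_(i <- r | P i) F i) = \sum_(i <- r | P i) legendre_op (F i).
Proof.
have op0 : legendre_op 0 = 0 by rewrite /legendre_op !deriv0 !mulr0 subr0 addr0.
exact: (big_morph _ legendre_opD op0).
Qed.

Lemma legendre_op_XsubC_exp c k : legendre_op (('X - c%:P) ^+ k) =
  ((n * n.+1)%:R - (k * k.+1)%:R) *: ('X - c%:P) ^+ k
  - ((2 * k * k)%:R * c) *: ('X - c%:P) ^+ k.-1
  + ((1 - c ^+ 2) * (k * k.-1)%:R) *: ('X - c%:P) ^+ k.-2.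
Proof.
rewrite /legendre_op !deriv_exp derivXsubC mul1r derivMn deriv_exp derivXsubC.
rewrite mul1r -!mul_polyC !(polyCB, polyCM, polyC_exp, polyC_natr) polyC1.
have -> : 'X = ('X - c%:P) + c%:P by rewrite subrK.
rewrite addrK; move: ('X - c%:P) => y.
case: k => [|[|k]] /=; rewrite ?expr0 ?expr1 ?exprS; ring.
Qed.

Lemma legendre_op_Xn m : legendre_op 'X^m =
  ((n * n.+1)%:R - (m * m.+1)%:R) *: 'X^m + (m * m.-1)%:R *: 'X^(m.-2).
Proof.
have := legendre_op_XsubC_exp 0 m.
by rewrite polyC0 expr0n mulr0 scale0r !subr0 mul1r.
Qed.

Lemma legendre_op_eq0 (f : {poly rat}) :
  (size f <= n.+1)%N -> f`_n = 0 -> legendre_op f = 0 -> f = 0.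
Proof.
move=> size_f fn0 Lf0.
have rec i : (i.+2 * i.+1)%:R * f`_i.+2
             + ((n * n.+1)%:R - (i * i.+1)%:R) * f`_i = 0.
  by rewrite -coef_legendre_op Lf0 coef0.
suff fi0 d i : (n - i <= d)%N -> f`_i = 0.
  by apply/polyP => i; rewrite coef0 (fi0 (n - i)%N).
elim: d i => [|d IH] i le_ni.
  case: (ltngtP i n) => [|lt_ni|->] //; first lia.
  by rewrite nth_default // (leq_trans size_f).
case: (leqP (n - i) d) => [|lt_d]; first exact: IH.
have lt_i : (i * i.+1 < n * n.+1)%N by apply: ltn_mul; lia.
move: (rec i); rewrite (IH i.+2) ?mulr0 ?add0r; last lia.
move/eqP; rewrite mulf_eq0 subr_eq0 eqr_nat => /orP[/eqP eq_i|/eqP //].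
by rewrite eq_i ltnn in lt_i.
Qed.

End LegendreOperator.

(* n^_k (n+k)^_k / k!^2 = C(n,k) C(n+k,k) *)
Definition legendre_shift_coef (n k : nat) : rat :=
  (n ^_ k * (n + k) ^_ k)%:R / (k`! ^ 2 * 2 ^ k)%:R.

Definition legendre_shift (n : nat) : {poly rat} :=
  \sum_(k < n.+1) legendre_shift_coef n k *: ('X - 1) ^+ k.

Lemma legendre_shift_coefS n j : (j < n)%N ->
  legendre_shift_coef n j * ((n * n.+1)%:R - (j * j.+1)%:R)
  = legendre_shift_coef n j.+1 * (2 * j.+1 * j.+1)%:R.
Proof.
move=> lt_jn; rewrite /legendre_shift_coef ffactnSr addnS ffactSS factS.
have two_neq0 : (2 ^+ j : rat) != 0 by rewrite expf_neq0.
rewrite !(natrM, natrX, natrB) ?(ltnW lt_jn) //= [2 ^+ j.+1]exprS.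
by field; rewrite natr_fact_neq0 two_neq0 addrC natr1 pnatr_eq0.
Qed.

Lemma legendre_op_shift n : legendre_op n (legendre_shift n) = 0.
Proof.
rewrite /legendre_shift legendre_op_sum.
under eq_bigr do rewrite legendre_opZ -polyC1 legendre_op_XsubC_exp expr1n
  subrr mul0r scale0r addr0 mulr1 scalerBr !scalerA.
rewrite sumrB big_ord_recr big_ord_recl /= subrr mulr0 scale0r addr0.
rewrite !muln0 mulr0 scale0r add0r; apply/eqP; rewrite subr_eq0; apply/eqP.
by apply: eq_bigr => j _; rewrite legendre_shift_coefS.
Qed.

Definition legendre_coef (n k : nat) : rat :=
  (-1) ^+ k * ((2 * n - 2 * k)`!)%:R
    / ((k`!)%:R * ((n - k)`!)%:R * ((n - 2 * k)`!)%:R).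

Lemma legendrePE n : legendreP n =
  2%:R ^- n *: \sum_(k < n./2.+1) legendre_coef n k *: 'X^(n - 2 * k).
Proof. by []. Qed.

Lemma legendre_coefS n k : (2 * k.+1 <= n)%N ->
  legendre_coef n k * ((n - 2 * k) * (n - 2 * k).-1)%:R
  + legendre_coef n k.+1 * ((n * n.+1)%:R - ((n - 2 * k.+1) * (n - 2 * k.+1).+1)%:R)
  = 0.
Proof.
move=> le_kn; have [i ->] : exists i, n = (i + 2 * k.+1)%N.
  by exists (n - 2 * k.+1)%N; rewrite subnK.
rewrite /legendre_coef.
have -> : (2 * (i + 2 * k.+1) - 2 * k = (2 * i + 2 * k + 2).+2)%N by lia.
have -> : (i + 2 * k.+1 - k = (i + k + 1).+1)%N by lia.
have -> : (i + 2 * k.+1 - 2 * k = i.+2)%N by lia.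
have -> : (2 * (i + 2 * k.+1) - 2 * k.+1 = 2 * i + 2 * k + 2)%N by lia.
have -> : (i + 2 * k.+1 - k.+1 = i + k + 1)%N by lia.
have -> : (i + 2 * k.+1 - 2 * k.+1 = i)%N by lia.
rewrite !factS !natrM exprS /=.
field.
by rewrite !natr_fact_neq0 /= !paddr_eq0 ?ler01 ?ler0n ?addr_ge0 ?oner_eq0 ?andbF.
Qed.

Lemma leq_double_ord_half n (k : 'I_n./2) : (2 * k.+1 <= n)%N.
Proof. by rewrite mul2n -geq_half_double ltn_ord. Qed.

Lemma legendre_op_legendreP n : legendre_op n (legendreP n) = 0.
Proof.
rewrite legendrePE legendre_opZ legendre_op_sum.
under eq_bigr do rewrite legendre_opZ legendre_op_Xn scalerDr !scalerA.
rewrite big_split /= big_ord_recl big_ord_recr /=.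
rewrite muln0 subn0 subrr mulr0 scale0r add0r.
have -> : (n - 2 * n./2 = odd n)%N by have := odd_double_half n; rewrite -muln2; lia.
rewrite (_ : (odd n * (odd n).-1)%N = 0%N) ?mulr0 ?scale0r ?addr0; last by case: odd.
rewrite -big_split /= -[RHS](scaler0 _ (2%:R ^- n)); congr (_ *: _).
apply: big1 => k _; rewrite /bump /= add1n.
have /(congr1 (fun m => 'X^m)) <- : ((n - 2 * k).-2 = n - 2 * k.+1)%N.
  by have := leq_double_ord_half k; lia.
by rewrite -scalerDl addrC legendre_coefS ?scale0r // leq_double_ord_half.
Qed.

Lemma size_legendreP n : (size (legendreP n) <= n.+1)%N.
Proof.
rewrite legendrePE (leq_trans (size_scale_leq _ _)) // (leq_trans (size_sum _ _ _)) //.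
apply/bigmax_leqP => k _; rewrite (leq_trans (size_scale_leq _ _)) // size_polyXn.
by rewrite ltnS leq_subr.
Qed.

Lemma lead_coef_legendreP n :
  (legendreP n)`_n = 2%:R ^- n * ((2 * n)`!)%:R / ((n`!)%:R ^+ 2).
Proof.
rewrite legendrePE coefZ coef_sum big_ord_recl big1 => [|k _]; last first.
  rewrite coefZ coefXn (_ : (_ == _) = false) ?mulr0 //=.
  by have := leq_double_ord_half k; rewrite /bump /=; lia.
rewrite addr0 coefZ coefXn /legendre_coef muln0 !subn0 eqxx fact0 expr0 !mul1r.
by rewrite mulr1 mulrA expr2.
Qed.

Lemma size_legendre_shift n : (size (legendre_shift n) <= n.+1)%N.
Proof.
rewrite (leq_trans (size_sum _ _ _)) //; apply/bigmax_leqP => k _.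
by rewrite (leq_trans (size_scale_leq _ _)) // -polyC1 size_exp_XsubC.
Qed.

Lemma lead_coef_legendre_shift n : (legendre_shift n)`_n = legendre_shift_coef n n.
Proof.
rewrite /legendre_shift coef_sum big_ord_recr /= big1 ?add0r => [|k _].
  have /monicP := monic_exp n (monicXsubC (1 : rat)).
  by rewrite coefZ lead_coefE size_exp_XsubC polyC1 => ->; rewrite mulr1.
by rewrite coefZ nth_default ?mulr0 // -polyC1 size_exp_XsubC.
Qed.

Lemma legendreP_shift n : legendreP n = legendre_shift n.
Proof.
apply/eqP; rewrite -subr_eq0; apply/eqP; apply: (legendre_op_eq0 (n := n)).
- by rewrite (leq_trans (size_polyD _ _)) // size_polyN geq_max size_legendreP size_legendre_shift.
- rewrite coefB lead_coef_legendreP lead_coef_legendre_shift /legendre_shift_coef.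
  rewrite ffactnn mul2n -addnn -(ffact_fact (leq_addl n n)) addnK.
  by rewrite !(natrM, natrX); field; rewrite natr_fact_neq0 expf_neq0.
- by rewrite legendre_opB legendre_op_legendreP legendre_op_shift subrr.
Qed.

Lemma numq_cross (q : rat) (a : int) (b : nat) :
  q * b%:R = a%:~R -> numq q * b%:Z = a * denq q.
Proof.
move=> qb; apply: (@intr_inj rat); rewrite !rmorphM /= numqE -qb.
by rewrite mulrAC.
Qed.

Section PFractions.

Variable p : nat.
Hypothesis p_prime : prime p.

(* Any fraction with denominator prime to p witnesses [pintegral]; unlike the
   reduced denominator, such witnesses are immediately closed under + and *. *)
Definition pfrac (q : rat) : Prop :=
  exists (a : int) (b : nat), ~~ (p %| b)%N /\ q = a%:~R / b%:R.

Lemma pfrac_int (z : int) : pfrac z%:~R.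
Proof.
by exists z, 1%N; rewrite dvdn1 divr1; split=> //; apply: contraTneq p_prime => ->.
Qed.

Lemma natr_neq0_ndvd (b : nat) : ~~ (p %| b)%N -> (b%:R : rat) != 0.
Proof. by rewrite pnatr_eq0; apply: contraNneq => ->; rewrite dvdn0. Qed.

Lemma pfracD q r : pfrac q -> pfrac r -> pfrac (q + r).
Proof.
move=> [a [b [pb ->]]] [c [d [pd ->]]].
exists (a * d%:Z + c * b%:Z), (b * d)%N; split; first by rewrite Euclid_dvdM // negb_or pb.
rewrite natrM; field.
by rewrite !natr_neq0_ndvd.
Qed.

Lemma pfracM q r : pfrac q -> pfrac r -> pfrac (q * r).
Proof.
move=> [a [b [pb ->]]] [c [d [pd ->]]].
exists (a * c), (b * d)%N; split; first by rewrite Euclid_dvdM // negb_or pb.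
by rewrite rmorphM natrM /= invfM mulrACA.
Qed.

Lemma pfrac_sum (I : Type) (r : seq I) (P : pred I) (F : I -> rat) :
  (forall i, P i -> pfrac (F i)) -> pfrac (\sum_(i <- r | P i) F i).
Proof. by apply: big_ind => //; [exact: (pfrac_int 0) | exact: pfracD]. Qed.

Lemma pintegral_pfrac q : pfrac q -> pintegral p q.
Proof.
move=> [a [b [pb qE]]].
have qb : q * b%:R = a%:~R by rewrite qE divfK ?natr_neq0_ndvd.
apply: contra pb => p_den.
have : (denq q %| numq q * b%:Z)%Z by rewrite (numq_cross qb) dvdz_mull.
rewrite Gauss_dvdzr; last by rewrite /coprimez gcdzC; apply: coprime_num_den.
by rewrite dvdzE /= => /(dvdn_trans p_den).
Qed.

Lemma dvdz_numq_pfrac q : pfrac (q / p%:R) -> (p%:Z %| numq q)%Z.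
Proof.
move=> [a [b [pb qE]]].
have p_neq0 : (p%:R : rat) != 0 by rewrite pnatr_eq0 -lt0n prime_gt0.
have qb : q * b%:R = (p%:Z * a)%:~R.
  by rewrite rmorphM /= -(divfK p_neq0 q) qE; field; rewrite natr_neq0_ndvd.
have : (p%:Z %| numq q * b%:Z)%Z by rewrite (numq_cross qb) -mulrA dvdz_mulr.
by rewrite !dvdzE abszM Euclid_dvdM // (negbTE pb) orbF.
Qed.

Lemma pfrac_coef_XsubC_comb m (c : nat -> rat) i :
  (forall k, (k < m)%N -> pfrac (c k)) ->
  pfrac ((\sum_(k < m) c k *: ('X - 1) ^+ k)`_i).
Proof.
move=> pc; rewrite coef_sum; apply: pfrac_sum => k _.
have -> : ('X - 1 : {poly rat}) ^+ k = map_poly intr (('X - 1) ^+ k : {poly int}).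
  by rewrite rmorphXn rmorphB /= map_polyX rmorph1.
by rewrite coefZ coef_map; apply: pfracM (pc k (ltn_ord k)) (pfrac_int _).
Qed.

Lemma poly_cong_mod_XsubC_comb m (c d : nat -> rat) :
  (forall k, (k < m)%N -> [/\ pfrac (c k), pfrac (d k) & pfrac ((c k - d k) / p%:R)]) ->
  poly_cong_mod p (\sum_(k < m) c k *: ('X - 1) ^+ k)
                  (\sum_(k < m) d k *: ('X - 1) ^+ k).
Proof.
move=> pcd i; split.
- by apply/pintegral_pfrac/pfrac_coef_XsubC_comb => k /pcd[].
- by apply/pintegral_pfrac/pfrac_coef_XsubC_comb => k /pcd[].
apply/dvdz_numq_pfrac; rewrite -coefB -sumrB mulrC -coefZ scaler_sumr.
under eq_bigr do rewrite -scalerBl scalerA mulrC.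
by apply: (pfrac_coef_XsubC_comb (c := fun k => (c k - d k) / p%:R)) => k /pcd[].
Qed.

End PFractions.

Lemma prime_ndvd_fact p k : prime p -> (k < p)%N -> ~~ (p %| k`!)%N.
Proof.
move=> p_prime; elim: k => [|k IH] lt_kp; first by rewrite fact0 gtnNdvd // prime_gt1.
by rewrite factS Euclid_dvdM // negb_or IH ?(ltnW lt_kp) // gtnNdvd.
Qed.

Lemma ffact_pair_trinomial (R : comRingType) (n k : nat) :
  ((3 * n).+1 * (3 * n).+2)%:R = 0 :> R -> (k <= n)%N ->
  (27 ^ k * k`! * (n ^_ k * (n + k) ^_ k))%:R = (-1) ^+ k * ((3 * k)`!)%:R :> R.
Proof.
move=> char_n; elim: k => [|k IH] lt_kn; first by rewrite mul1r.
have step : (27 * k.+1 * ((n - k) * (n + k).+1))%:R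
            = - ((3 * k).+3 * (3 * k).+2 * (3 * k).+1)%:R :> R.
  transitivity ((3 * k.+1)%:R * (((3 * n).+1 * (3 * n).+2)%:R
                                 - ((3 * k).+1 * (3 * k).+2)%:R) : R).
    by rewrite !natrM natrB 1?ltnW //; ring.
  by rewrite char_n; ring.
have -> : (27 ^ k.+1 * k.+1`! * (n ^_ k.+1 * (n + k.+1) ^_ k.+1)
          = 27 ^ k * k`! * (n ^_ k * (n + k) ^_ k)
            * (27 * k.+1 * ((n - k) * (n + k).+1)))%N.
  by rewrite ffactnSr addnS ffactSS factS expnS; ring.
rewrite (_ : 3 * k.+1 = (3 * k).+3)%N; last by lia.
by rewrite !factS natrM IH 1?ltnW // step exprS; ring.
Qed.

Definition trinomial_shift_coef (k : nat) : rat :=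
  ((3 * k)`!)%:R / ((k`!)%:R ^+ 3) * (- 54%:R^-1) ^+ k.

Lemma legendre_shift_coef_frac n k : legendre_shift_coef n k =
  (27 ^ k * k`! * (n ^_ k * (n + k) ^_ k))%:R / (k`! ^ 3 * 54 ^ k)%:R.
Proof.
rewrite /legendre_shift_coef (_ : 54 = 2 * 27)%N // expnMn !(natrM, natrX).
by field; rewrite natr_fact_neq0 !expf_neq0.
Qed.

Lemma trinomial_shift_coef_frac k : trinomial_shift_coef k =
  ((-1) ^+ k * ((3 * k)`!)%:Z)%:~R / (k`! ^ 3 * 54 ^ k)%:R.
Proof.
rewrite /trinomial_shift_coef rmorphM rmorphXn /= rmorphN1 natrM !natrX.
by rewrite exprNn exprVn; field; rewrite natr_fact_neq0 expf_neq0.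
Qed.

Lemma ndvd_trinomial_den p k : prime p -> (3 < p)%N -> (k < p)%N ->
  ~~ (p %| k`! ^ 3 * 54 ^ k)%N.
Proof.
move=> p_prime p_gt3 lt_kp.
have ndvd54 : ~~ (p %| 54)%N.
  rewrite (_ : 54 = 2 * 3 ^ 3)%N // Euclid_dvdM // Euclid_dvdX //.
  by rewrite negb_or !gtnNdvd // (ltn_trans _ p_gt3).
rewrite Euclid_dvdM // !Euclid_dvdX // (negbTE (prime_ndvd_fact p_prime lt_kp)).
by rewrite (negbTE ndvd54).
Qed.

Lemma pfrac_shift_coef_diff p n k :
  prime p -> (3 < p)%N -> (p %| (3 * n).+1 * (3 * n).+2)%N -> (k <= n)%N -> (k < p)%N ->
  pfrac p ((legendre_shift_coef n k - trinomial_shift_coef k) / p%:R).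
Proof.
move=> p_prime p_gt3 p_dvd le_kn lt_kp.
have char_p := pchar_Fp p_prime.
set A := (27 ^ k * k`! * (n ^_ k * (n + k) ^_ k))%N.
have : (p%:Z %| A%:Z - (-1) ^+ k * ((3 * k)`!)%:Z)%Z.
  rewrite (dvdz_pcharf char_p) rmorphB [X in _ - X]rmorphM /= intr_sign -!pmulrn.
  rewrite ffact_pair_trinomial ?subrr //.
  by apply/eqP; rewrite -(dvdn_pcharf char_p).
case/dvdzP=> m mE; exists m, (k`! ^ 3 * 54 ^ k)%N.
split; first exact: ndvd_trinomial_den.
rewrite legendre_shift_coef_frac trinomial_shift_coef_frac -mulrBl -/A.
have -> : A%:R - ((-1) ^+ k * ((3 * k)`!)%:Z)%:~R = (m * p%:Z)%:~R :> rat.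
  by rewrite -mE rmorphB.
have p_neq0 : (p%:R : rat) != 0 by rewrite pnatr_eq0 -lt0n prime_gt0.
by rewrite rmorphM /= -pmulrn mulrAC mulfK.
Qed.

Lemma pfrac_legendre_shift_coef p n k :
  prime p -> (3 < p)%N -> (k < p)%N -> pfrac p (legendre_shift_coef n k).
Proof.
move=> p_prime p_gt3 lt_kp; rewrite legendre_shift_coef_frac.
by exists (27 ^ k * k`! * (n ^_ k * (n + k) ^_ k))%N, (k`! ^ 3 * 54 ^ k)%N; split;
  [apply: ndvd_trinomial_den | rewrite -pmulrn].
Qed.

Lemma pfrac_trinomial_shift_coef p k :
  prime p -> (3 < p)%N -> (k < p)%N -> pfrac p (trinomial_shift_coef k).
Proof.
move=> p_prime p_gt3 lt_kp; rewrite trinomial_shift_coef_frac.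
by exists ((-1) ^+ k * ((3 * k)`!)%:Z), (k`! ^ 3 * 54 ^ k)%N; split;
  [apply: ndvd_trinomial_den |].
Qed.

Lemma prime_dvd_third p : prime p -> (3 < p)%N ->
  (p %| (3 * (p %/ 3)).+1 * (3 * (p %/ 3)).+2)%N.
Proof.
move=> p_prime p_gt3.
have ndvd3 : ~~ (3 %| p)%N.
  by apply/negP => /(prime_nt_dvdP p_prime) p3; move: p_gt3; rewrite -p3 ?ltnn.
have pE : p = (3 * (p %/ 3) + p %% 3)%N by rewrite mulnC -divn_eq.
have : (p %% 3 = 1 \/ p %% 3 = 2)%N.
  by move: ndvd3 (ltn_mod p 3); rewrite /dvdn; lia.
case=> r_eq; rewrite [X in (X %| _)%N]pE r_eq ?addn1 ?addn2.
  exact: dvdn_mulr.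
exact: dvdn_mull.
Qed.

Theorem lemma2p3 (p : nat) (hp : prime p) (hp3 : (3 < p)%N) :
  poly_cong_mod p (legendreP (p %/ 3))
    (\sum_(k < (p %/ 3).+1)
        (((3 * k)`!)%:R / ((k`!)%:R ^+ 3) : rat)
          *: ((54%:R)^-1 *: (1 - 'X)) ^+ k).
Proof.
set n := (p %/ 3)%N.
have lt_np : (n < p)%N by rewrite ltn_Pdiv // prime_gt0.
have -> : \sum_(k < n.+1) (((3 * k)`!)%:R / ((k`!)%:R ^+ 3) : rat)
            *: ((54%:R)^-1 *: (1 - 'X)) ^+ k
          = \sum_(k < n.+1) trinomial_shift_coef k *: ('X - 1) ^+ k.
  apply: eq_bigr => k _; rewrite -opprB scalerN -scaleNr exprZn scalerA.
  by rewrite /trinomial_shift_coef.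
rewrite legendreP_shift /legendre_shift; apply: poly_cong_mod_XsubC_comb => // k le_kn.
have lt_kp : (k < p)%N := leq_trans le_kn lt_np.
split; [exact: pfrac_legendre_shift_coef | exact: pfrac_trinomial_shift_coef |].
exact: pfrac_shift_coef_diff (prime_dvd_third hp hp3) le_kn lt_kp.
Qed.
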